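(* If \(A\subseteq\operatorname{Homeo}_+(I)\) is a finite geometrically proper set of positive bump functions, then the following are equivalent: (1) \(A\) is geometrically fast; (2) every stretched transition chain \(C\) of \(A\) satisfies \(C_{\max}\le C_{\min}\prod C\); (3) every maximal stretched transition chain \(C\) of \(A\) satisfies \(C_{\max}\le C_{\min}\prod C\).
   Context: \(I=[0,1]\); homeomorphisms act on the right (\(tg\) is the image of \(t\); \(fg\) means apply \(f\) first). A positive bump is an element of \(\operatorname{Homeo}_+(I)\) whose support \(\{t: ta\neq t\}\) is a single open interval \((x,y)\) on which \(ta>t\); its transition points are \(x\) (left) and \(y\) (right). A transition point of \(A\) is one of some element of \(A\). \(A\) is geometrically proper if no point is a left transition point of two distinct elements, nor a right transition point of two distinct elements. A marking of \(A\) assigns each \(a\) a marker \(t\in\operatorname{supt}(a)\); for \(a\) with support \((x,y)\) its feet are \((x,t)\) and \([ta,y)\). \(A\) is geometrically fast if geometrically proper and some marking makes all feet pairwise disjoint. An element of \(A\) is isolated if its support contains no transition point of \(A\). A sequence \(C=(a_i\mid i\le k)\) of nonisolated elements of \(A\), \(\operatorname{supt}(a_i)=(x_i,y_i)\), is a stretched transition chain if for all \(i<k\), \(x_i<x_{i+1}<y_i<y_{i+1}\), and no transition point of \(A\) lies in any \((x_{i+1},y_i)\); maximal means maximal under containment as a subset of \(A\). \(\prod C=a_0a_1\cdots a_k\); \(C_{\min}\) (resp. \(C_{\max}\)) is the least (resp. greatest) transition point of \(A\) lying in the union of the supports of the elements of \(C\). *)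

From Stdlib Require Import Reals Lra List.
Import ListNotations.
Open Scope R_scope.

Definition inI (t : R) : Prop := 0 <= t <= 1.

(* Homeomorphisms act on the right: t g is written (g t).
   An element of Homeo_+(I) is represented by a function R -> R that is the
   identity outside I (so that distinct homeomorphisms are distinct functions),
   continuous, strictly increasing on I and mapping I onto I. *)
Definition homeoI (f : R -> R) : Prop :=
  (forall t, ~ inI t -> f t = t) /\
  (forall t, continuity_pt f t) /\
  (forall s t, inI s -> inI t -> s < t -> f s < f t) /\
  (forall t, inI t -> inI (f t)) /\
  (forall u, inI u -> exists t, inI t /\ f t = u).

Definition bump_supp (a : R -> R) (x y : R) : Prop :=
  0 <= x /\ x < y /\ y <= 1 /\
  (forall t, inI t -> (a t <> t <-> x < t < y)) /\
  (forall t, x < t < y -> t < a t).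

Definition positive_bump (a : R -> R) : Prop :=
  homeoI a /\ exists x y, bump_supp a x y.

(* Finite sets of homeomorphisms are given by lists (membership = In). *)
Definition hset := list (R -> R).

Definition transition_point (A : hset) (t : R) : Prop :=
  exists a x y, In a A /\ bump_supp a x y /\ (t = x \/ t = y).

Definition geometrically_proper (A : hset) : Prop :=
  (forall a b x y y', In a A -> In b A ->
     bump_supp a x y -> bump_supp b x y' -> a = b) /\
  (forall a b x x' y, In a A -> In b A ->
     bump_supp a x y -> bump_supp b x' y -> a = b).

Definition foot (a : R -> R) (m : R) (right : bool) (t : R) : Prop :=
  exists x y, bump_supp a x y /\
    (if right then a m <= t < y else x < t < m).

Definition geometrically_fast (A : hset) : Prop :=
  geometrically_proper A /\
  exists mark : (R -> R) -> R,
    (forall a, In a A -> exists x y, bump_supp a x y /\ x < mark a < y) /\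
    (forall a b (sa sb : bool) t, In a A -> In b A -> (a, sa) <> (b, sb) ->
       foot a (mark a) sa t -> foot b (mark b) sb t -> False).

Definition isolated (A : hset) (a : R -> R) : Prop :=
  forall x y, bump_supp a x y ->
    forall t, x < t < y -> ~ transition_point A t.

Definition stretched_chain (A : hset) (C : list (R -> R)) : Prop :=
  C <> [] /\
  (forall a, In a C -> In a A /\ ~ isolated A a) /\
  (forall i xi yi xj yj, (S i < length C)%nat ->
     bump_supp (nth i C id) xi yi -> bump_supp (nth (S i) C id) xj yj ->
     xi < xj /\ xj < yi /\ yi < yj /\
     (forall t, xj < t < yi -> ~ transition_point A t)).

Definition maximal_stretched_chain (A : hset) (C : list (R -> R)) : Prop :=
  stretched_chain A C /\
  forall C', stretched_chain A C' ->
    (forall a, In a C -> In a C') -> (forall a, In a C' -> In a C).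

Definition in_union_supp (C : list (R -> R)) (t : R) : Prop :=
  exists a x y, In a C /\ bump_supp a x y /\ x < t < y.

Definition is_Cmin (A : hset) (C : list (R -> R)) (t : R) : Prop :=
  transition_point A t /\ in_union_supp C t /\
  forall s, transition_point A s -> in_union_supp C s -> t <= s.

Definition is_Cmax (A : hset) (C : list (R -> R)) (t : R) : Prop :=
  transition_point A t /\ in_union_supp C t /\
  forall s, transition_point A s -> in_union_supp C s -> s <= t.

(* t (prod C) = t a_0 a_1 ... a_k : apply a_0 first *)
Definition prodC (C : list (R -> R)) (t : R) : R :=
  fold_left (fun s a => a s) C t.

Definition chain_condition (A : hset) (C : list (R -> R)) : Prop :=
  forall tmin tmax, is_Cmin A C tmin -> is_Cmax A C tmax ->
    tmax <= prodC C tmin.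

From Stdlib Require Import Reals List.
From Stdlib Require Import Lra Lia Classical ClassicalEpsilon.
Import ListNotations.
Open Scope R_scope.

(* (1) => (2): in a fast marking the feet of a contain no transition point,
   and whenever b precedes a in a chain the left foot of a must lie below the
   right foot of b, i.e. m_a <= m_b b.  Along a chain a_0, ..., a_k this gives
   C_min >= m_0, C_max <= m_k a_k and m_(i+1) <= m_i a_i, so C_max <= C_min prod C
   by monotonicity.
   (3) => (1): markers are propagated forward along chains: the first element of
   a maximal chain is marked at its least interior transition point (which is
   C_min), and a_(i+1) is marked at m_i a_i, so that m_k a_k = C_min prod C.  The
   chain condition then keeps each marker inside its support and the feet free of
   transition points.  Free feet of two bumps can only meet when a left foot meets
   a right foot, which forces the two bumps to be consecutive in a chain, where
   the markers were chosen so that the feet just touch. *)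

Local Notation "C `_ i" := (nth i C id) (at level 3, i at level 2, format "C `_ i").

Lemma open_interval_incl x y x' y' :
  x < y -> (forall t, x < t < y -> x' < t < y') -> x' <= x /\ y <= y'.
Proof.
  intros Hxy Hincl. split; apply Rnot_lt_le; intro Hlt.
  - pose proof (Rmin_l x' y). pose proof (Rmin_r x' y). pose proof (Rmin_glb_lt x' y x Hlt Hxy).
    assert (Ht : x < (x + Rmin x' y) / 2 < y) by lra.
    apply Hincl in Ht. lra.
  - pose proof (Rmax_l x y'). pose proof (Rmax_r x y'). pose proof (Rmax_lub_lt x y' y Hxy Hlt).
    assert (Ht : x < (Rmax x y' + y) / 2 < y) by lra.
    apply Hincl in Ht. lra.
Qed.

Lemma open_interval_eq x y x' y' :
  x < y -> x' < y' -> (forall t, x < t < y <-> x' < t < y') -> x = x' /\ y = y'.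
Proof.
  intros Hxy Hxy' Heq.
  destruct (open_interval_incl x y x' y' Hxy) as [? ?]; [apply Heq|].
  destruct (open_interval_incl x' y' x y Hxy') as [? ?]; [apply Heq|].
  lra.
Qed.

Lemma exists_least_in (P : R -> Prop) (l : list R) :
  (exists t, In t l /\ P t) ->
  exists m, In m l /\ P m /\ forall s, In s l -> P s -> m <= s.
Proof.
  induction l as [|x l IH]; intros (t & Ht & Pt); [destruct Ht|].
  destruct (classic (exists t, In t l /\ P t)) as [Hl | Hl].
  - destruct (IH Hl) as (m & Hm & Pm & Hmin).
    destruct (classic (P x /\ x < m)) as [[Px Hx] | Hx].
    + exists x. split; [left; reflexivity | split; [exact Px|]].
      intros s [<- | Hs] Ps; [lra|]. specialize (Hmin s Hs Ps). lra.
    + exists m. split; [right; exact Hm | split; [exact Pm|]].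
      intros s [<- | Hs] Ps; [|auto]. apply Rnot_lt_le. intro. apply Hx. auto.
  - destruct Ht as [<- | Ht]; [|exfalso; eauto].
    exists x. split; [left; reflexivity | split; [exact Pt|]].
    intros s [<- | Hs] Ps; [lra | exfalso; eauto].
Qed.

Lemma exists_greatest_in (P : R -> Prop) (l : list R) :
  (exists t, In t l /\ P t) ->
  exists m, In m l /\ P m /\ forall s, In s l -> P s -> s <= m.
Proof.
  intros (t & Ht & Pt).
  destruct (exists_least_in (fun u => P (- u)) (map Ropp l)) as (m & Hm & Pm & Hmin).
  - exists (- t). rewrite Ropp_involutive. split; [apply in_map|]; assumption.
  - apply in_map_iff in Hm as (u & <- & Hu). rewrite Ropp_involutive in Pm.
    exists u. split; [exact Hu | split; [exact Pm|]]. intros s Hs Ps.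
    assert (- u <= - s); [|lra].
    apply Hmin; [apply in_map, Hs | rewrite Ropp_involutive; exact Ps].
Qed.

Lemma filter_length_lt {T} (f g : T -> bool) (l : list T) c :
  (forall x, f x = true -> g x = true) -> In c l -> f c = false -> g c = true ->
  (length (filter f l) < length (filter g l))%nat.
Proof.
  intros Hfg Hc Hfc Hgc.
  assert (Hle : forall l', (length (filter f l') <= length (filter g l'))%nat).
  { induction l' as [|x l' IH]; simpl; [lia|].
    destruct (f x) eqn:Hfx; [rewrite (Hfg x Hfx); simpl; lia|].
    destruct (g x); simpl; lia. }
  induction l as [|x l IH]; [destruct Hc|]. simpl.
  destruct Hc as [<- | Hc].
  - rewrite Hfc, Hgc. simpl. specialize (Hle l). lia.
  - specialize (IH Hc).
    destruct (f x) eqn:Hfx; [rewrite (Hfg x Hfx) | destruct (g x)]; simpl; lia.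
Qed.

Lemma exists_longest {T} (P : list T -> Prop) (N : nat) :
  (exists l, P l) -> (forall l, P l -> (length l <= N)%nat) ->
  exists l, P l /\ forall l', P l' -> (length l' <= length l)%nat.
Proof.
  intros [l0 Hl0] Hbound.
  enough (Hk : forall k l, P l -> (N <= length l + k)%nat ->
            exists l, P l /\ forall l', P l' -> (length l' <= length l)%nat)
    by exact (Hk N l0 Hl0 ltac:(lia)).
  induction k as [|k IH]; intros l Hl Hk.
  - exists l. split; [exact Hl|]. intros l' Hl'. specialize (Hbound l' Hl'). lia.
  - destruct (classic (exists l', P l' /\ (length l < length l')%nat))
      as [(l' & Hl' & Hlt) | Hno].
    + apply (IH l'); [exact Hl' | lia].
    + exists l. split; [exact Hl|]. intros l' Hl'. apply Nat.nlt_ge. eauto.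
Qed.

(** * Positive bumps *)

Lemma bump_supp_unique a x y x' y' :
  bump_supp a x y -> bump_supp a x' y' -> x = x' /\ y = y'.
Proof.
  intros (Hx & Hxy & Hy & Hsupp & _) (Hx' & Hxy' & Hy' & Hsupp' & _).
  apply open_interval_eq; auto. intro t.
  destruct (classic (inI t)) as [Ht | Ht].
  - pose proof (Hsupp t Ht). pose proof (Hsupp' t Ht). tauto.
  - split; intro; exfalso; apply Ht; unfold inI; lra.
Qed.

Lemma bump_supp_fixed a x y t : bump_supp a x y -> inI t -> ~ x < t < y -> a t = t.
Proof.
  intros (_ & _ & _ & Hsupp & _) Ht Hout. apply NNPP. intro Hmoved.
  apply Hout, Hsupp; assumption.
Qed.

Lemma positive_bump_lt a s t : positive_bump a -> inI s -> inI t -> s < t -> a s < a t.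
Proof. intros [(_ & _ & Hmono & _) _]. apply Hmono. Qed.

Lemma positive_bump_le a s t : positive_bump a -> inI s -> inI t -> s <= t -> a s <= a t.
Proof.
  intros Ha Hs Ht [Hlt | ->]; [left; apply positive_bump_lt | right]; auto.
Qed.

Lemma positive_bump_inI a t : positive_bump a -> inI t -> inI (a t).
Proof. intros [(_ & _ & _ & HI & _) _]. apply HI. Qed.

Lemma positive_bump_supp a x y t :
  positive_bump a -> bump_supp a x y -> x < t < y -> t < a t < y.
Proof.
  intros Ha Hs Ht. pose proof Hs as (Hx & Hxy & Hy & _ & Hpos).
  split; [apply Hpos, Ht|].
  rewrite <- (bump_supp_fixed a x y y Hs) by (unfold inI; lra).
  apply positive_bump_lt; unfold inI; auto; lra.
Qed.

Definition supp_ends (a : R -> R) : R * R :=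
  epsilon (inhabits (0, 0)) (fun p => bump_supp a (fst p) (snd p)).

Definition left_tp (a : R -> R) : R := fst (supp_ends a).
Definition right_tp (a : R -> R) : R := snd (supp_ends a).

Lemma supp_ends_eq a x y : bump_supp a x y -> left_tp a = x /\ right_tp a = y.
Proof.
  intro Hs. apply (bump_supp_unique a); [|exact Hs].
  apply (epsilon_spec (inhabits (0, 0)) (fun p => bump_supp a (fst p) (snd p))).
  now exists (x, y).
Qed.

Lemma positive_bump_ends a : positive_bump a -> bump_supp a (left_tp a) (right_tp a).
Proof. intros [_ (x & y & Hs)]. destruct (supp_ends_eq a x y Hs) as [? ?]; subst. exact Hs. Qed.

Lemma prodC_cons c L t : prodC (c :: L) t = prodC L (c t).
Proof. reflexivity. Qed.

Lemma prodC_ge (g : (R -> R) -> R) L s :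
  L <> [] -> (forall a, In a L -> positive_bump a /\ inI (g a)) ->
  (forall i, (S i < length L)%nat -> g L`_(S i) <= L`_i (g L`_i)) ->
  inI s -> g L`_0 <= s ->
  L`_(Nat.pred (length L)) (g L`_(Nat.pred (length L))) <= prodC L s.
Proof.
  induction L as [|c L IH] in s |- *; intros Hne HL Hlink Hs Hgs; [congruence|].
  destruct (HL c (or_introl eq_refl)) as [Hc Hgc].
  destruct L as [|c' L]; [apply positive_bump_le; auto|].
  rewrite prodC_cons. apply IH.
  - discriminate.
  - intros a Ha. apply HL. right. exact Ha.
  - intros i Hi. apply (Hlink (S i)). simpl in *. lia.
  - apply positive_bump_inI; assumption.
  - apply Rle_trans with (c (g c)); [apply (Hlink 0%nat); simpl; lia|].
    apply positive_bump_le; assumption.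
Qed.

Lemma prodC_eq (g : (R -> R) -> R) L :
  L <> [] -> (forall i, (S i < length L)%nat -> g L`_(S i) = L`_i (g L`_i)) ->
  prodC L (g L`_0) = L`_(Nat.pred (length L)) (g L`_(Nat.pred (length L))).
Proof.
  induction L as [|c L IH]; intros Hne Hlink; [congruence|].
  destruct L as [|c' L]; [reflexivity|].
  assert (Hc : g c' = c (g c)) by exact (Hlink 0%nat ltac:(simpl; lia)).
  change (c :: c' :: L)`_0 with c. rewrite prodC_cons, <- Hc. apply IH.
  - discriminate.
  - intros i Hi. apply (Hlink (S i)). simpl in *. lia.
Qed.

Section BumpSet.

Variable A : hset.
Hypothesis bumps : forall a, In a A -> positive_bump a.

Lemma ends_in a : In a A -> bump_supp a (left_tp a) (right_tp a).
Proof. intro Ha. apply positive_bump_ends, bumps, Ha. Qed.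

Lemma ends_bounds a : In a A -> 0 <= left_tp a /\ left_tp a < right_tp a /\ right_tp a <= 1.
Proof. intro Ha. destruct (ends_in a Ha) as (? & ? & ? & _). auto. Qed.

Lemma transition_pointE t :
  transition_point A t <-> exists a, In a A /\ (t = left_tp a \/ t = right_tp a).
Proof.
  split.
  - intros (a & x & y & Ha & Hs & Ht). exists a. split; [exact Ha|].
    destruct (supp_ends_eq a x y Hs) as [? ?]; subst. exact Ht.
  - intros (a & Ha & Ht). exists a, (left_tp a), (right_tp a). auto using ends_in.
Qed.

Lemma ends_transition_point a :
  In a A -> transition_point A (left_tp a) /\ transition_point A (right_tp a).
Proof. intro Ha. split; apply transition_pointE; eauto. Qed.

Lemma transition_point_inI t : transition_point A t -> inI t.
Proof.
  intro Ht. apply transition_pointE in Ht as (a & Ha & [-> | ->]);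
    pose proof (ends_bounds a Ha); unfold inI; lra.
Qed.

Lemma isolatedE a : In a A ->
  isolated A a <-> forall t, left_tp a < t < right_tp a -> ~ transition_point A t.
Proof.
  intro Ha. split.
  - intro Hiso. exact (Hiso _ _ (ends_in a Ha)).
  - intros Hfree x y Hs. destruct (supp_ends_eq a x y Hs) as [? ?]; subst. exact Hfree.
Qed.

Lemma foot_leftE a m t : In a A -> foot a m false t <-> left_tp a < t < m.
Proof.
  intro Ha. split.
  - intros (x & y & Hs & Ht). destruct (supp_ends_eq a x y Hs) as [? ?]; subst. exact Ht.
  - intro Ht. exists (left_tp a), (right_tp a). auto using ends_in.
Qed.

Lemma foot_rightE a m t : In a A -> foot a m true t <-> a m <= t < right_tp a.
Proof.
  intro Ha. split.
  - intros (x & y & Hs & Ht). destruct (supp_ends_eq a x y Hs) as [? ?]; subst. exact Ht.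
  - intro Ht. exists (left_tp a), (right_tp a). auto using ends_in.
Qed.

Definition transition_points : list R := flat_map (fun a => [left_tp a; right_tp a]) A.

Lemma In_transition_points t : In t transition_points <-> transition_point A t.
Proof.
  unfold transition_points. rewrite in_flat_map, transition_pointE.
  split; intros (a & Ha & Ht); exists a; split; auto; simpl in *.
  - destruct Ht as [<- | [<- | []]]; auto.
  - destruct Ht as [-> | ->]; auto.
Qed.

Lemma least_transition_point (P : R -> Prop) :
  (exists t, transition_point A t /\ P t) ->
  exists m, transition_point A m /\ P m /\
    forall s, transition_point A s -> P s -> m <= s.
Proof.
  intros (t & Ht & Pt).
  destruct (exists_least_in P transition_points) as (m & Hm & Pm & Hmin).
  - exists t. rewrite In_transition_points. auto.
  - exists m. rewrite In_transition_points in Hm. split; [exact Hm | split; [exact Pm|]].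
    intros s Hs. apply Hmin, In_transition_points, Hs.
Qed.

Lemma greatest_transition_point (P : R -> Prop) :
  (exists t, transition_point A t /\ P t) ->
  exists m, transition_point A m /\ P m /\
    forall s, transition_point A s -> P s -> s <= m.
Proof.
  intros (t & Ht & Pt).
  destruct (exists_greatest_in P transition_points) as (m & Hm & Pm & Hmax).
  - exists t. rewrite In_transition_points. auto.
  - exists m. rewrite In_transition_points in Hm. split; [exact Hm | split; [exact Pm|]].
    intros s Hs. apply Hmax, In_transition_points, Hs.
Qed.

(** * Stretched transition chains *)

Lemma stretched_chain_in C a : stretched_chain A C -> In a C -> In a A /\ ~ isolated A a.
Proof. intros (_ & Hmem & _). apply Hmem. Qed.

Lemma stretched_chain_nth_in C i : stretched_chain A C -> (i < length C)%nat -> In C`_i A.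
Proof. intros HC Hi. apply (stretched_chain_in C), nth_In; assumption. Qed.

Lemma stretched_chain_link C i : stretched_chain A C -> (S i < length C)%nat ->
  left_tp C`_i < left_tp C`_(S i) /\ left_tp C`_(S i) < right_tp C`_i /\
  right_tp C`_i < right_tp C`_(S i) /\
  (forall t, left_tp C`_(S i) < t < right_tp C`_i -> ~ transition_point A t).
Proof.
  intros HC Hi. pose proof HC as (_ & _ & Hlink).
  apply (Hlink i); [exact Hi | |]; apply ends_in, stretched_chain_nth_in; auto; lia.
Qed.

Lemma stretched_chain_ends_lt C i j : stretched_chain A C -> (i < j < length C)%nat ->
  left_tp C`_i < left_tp C`_j /\ right_tp C`_i < right_tp C`_j.
Proof.
  intros HC [Hij Hj]. induction Hij as [|j Hij IH].
  - destruct (stretched_chain_link C i HC Hj) as (? & ? & ? & _). lra.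
  - destruct IH as [? ?]; [lia|].
    destruct (stretched_chain_link C j HC Hj) as (? & ? & ? & _). lra.
Qed.

Lemma stretched_chain_ends_le C i j : stretched_chain A C -> (i <= j < length C)%nat ->
  left_tp C`_i <= left_tp C`_j /\ right_tp C`_i <= right_tp C`_j.
Proof.
  intros HC Hij. destruct (Nat.eq_dec i j) as [-> | Hne]; [lra|].
  destruct (stretched_chain_ends_lt C i j HC) as [? ?]; [lia | lra].
Qed.

Lemma stretched_chain_NoDup C : stretched_chain A C -> NoDup C.
Proof.
  intro HC. apply (NoDup_nth C id). intros i j Hi Hj Heq.
  destruct (Nat.lt_total i j) as [Hlt | [Hij | Hlt]]; [exfalso | exact Hij | exfalso].
  - destruct (stretched_chain_ends_lt C i j HC) as [Hx _]; [lia|]. rewrite Heq in Hx. lra.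
  - destruct (stretched_chain_ends_lt C j i HC) as [Hx _]; [lia|]. rewrite Heq in Hx. lra.
Qed.

Lemma chain_fixes_left C s i j : stretched_chain A C -> inI s -> s <= left_tp C`_i ->
  (i <= j < length C)%nat -> C`_j s = s.
Proof.
  intros HC Hs Hsi Hij.
  destruct (stretched_chain_ends_le C i j HC Hij) as [Hle _].
  apply (bump_supp_fixed _ (left_tp C`_j) (right_tp C`_j)); [|exact Hs|lra].
  apply ends_in, stretched_chain_nth_in; [exact HC | lia].
Qed.

Lemma in_union_suppE C t : stretched_chain A C ->
  in_union_supp C t <-> exists i, (i < length C)%nat /\ left_tp C`_i < t < right_tp C`_i.
Proof.
  intro HC. split.
  - intros (a & x & y & Ha & Hs & Ht). destruct (In_nth C a id Ha) as (i & Hi & <-).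
    exists i. destruct (supp_ends_eq _ x y Hs) as [? ?]; subst. auto.
  - intros (i & Hi & Ht). exists C`_i, (left_tp C`_i), (right_tp C`_i).
    split; [apply nth_In, Hi|]. split; [apply ends_in, stretched_chain_nth_in; auto | exact Ht].
Qed.

Lemma in_union_supp_bounds C t : stretched_chain A C -> in_union_supp C t ->
  left_tp C`_0 < t < right_tp C`_(Nat.pred (length C)).
Proof.
  intros HC Ht. apply (in_union_suppE C t HC) in Ht as (i & Hi & Ht).
  destruct (stretched_chain_ends_le C 0 i HC) as [H0 _]; [lia|].
  destruct (stretched_chain_ends_le C i (Nat.pred (length C)) HC) as [_ Hk]; [lia|].
  lra.
Qed.

Lemma stretched_chain_pairE b a : stretched_chain A [b; a] <->
  In b A /\ In a A /\ ~ isolated A b /\ ~ isolated A a /\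
  left_tp b < left_tp a /\ left_tp a < right_tp b /\ right_tp b < right_tp a /\
  (forall t, left_tp a < t < right_tp b -> ~ transition_point A t).
Proof.
  split.
  - intro Hba.
    destruct (stretched_chain_in _ b Hba) as [Hb Hbi]; [left; reflexivity|].
    destruct (stretched_chain_in _ a Hba) as [Ha Hai]; [right; left; reflexivity|].
    destruct (stretched_chain_link _ 0 Hba) as (? & ? & ? & ?); [simpl; lia|].
    simpl in *. tauto.
  - intros (Hb & Ha & Hbi & Hai & Hlink). split; [discriminate | split].
    + intros c [<- | [<- | []]]; auto.
    + intros [|i] xi yi xj yj Hi Hsi Hsj; simpl in *; [|lia].
      destruct (supp_ends_eq _ _ _ Hsi), (supp_ends_eq _ _ _ Hsj). subst. exact Hlink.
Qed.

Lemma stretched_chain_pair C i : stretched_chain A C -> (S i < length C)%nat ->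
  stretched_chain A [C`_i; C`_(S i)].
Proof.
  intros HC Hi. apply stretched_chain_pairE.
  destruct (stretched_chain_in C C`_i HC) as [? ?]; [apply nth_In; lia|].
  destruct (stretched_chain_in C C`_(S i) HC) as [? ?]; [apply nth_In; lia|].
  pose proof (stretched_chain_link C i HC Hi). tauto.
Qed.

Lemma stretched_chain_cons C b : stretched_chain A C -> stretched_chain A [b; C`_0] ->
  stretched_chain A (b :: C).
Proof.
  intros (Hne & Hmem & Hlink) Hb.
  apply stretched_chain_pairE in Hb as (Hb & _ & Hbi & _ & Hbc).
  split; [discriminate | split].
  - intros a [<- | Ha]; auto.
  - intros [|i] xi yi xj yj Hi Hsi Hsj; simpl in *.
    + destruct (supp_ends_eq _ _ _ Hsi), (supp_ends_eq _ _ _ Hsj). subst. exact Hbc.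
    + apply (Hlink i); auto; lia.
Qed.

Lemma exists_maximal_chain a : In a A -> ~ isolated A a ->
  exists C, maximal_stretched_chain A C /\ In a C.
Proof.
  intros Ha Hai.
  destruct (exists_longest (fun C => stretched_chain A C /\ In a C) (length A))
    as (C & [HC HaC] & Hlongest).
  - exists [a]. split; [|left; reflexivity]. split; [discriminate | split].
    + intros b [<- | []]. auto.
    + intros i ? ? ? ? Hi. simpl in Hi. lia.
  - intros C [HC _]. apply NoDup_incl_length; [apply stretched_chain_NoDup, HC|].
    intros b Hb. apply (stretched_chain_in C b HC Hb).
  - exists C. split; [split; [exact HC|] | exact HaC].
    intros C' HC' Hincl. apply NoDup_length_incl; [apply stretched_chain_NoDup, HC | | exact Hincl].
    apply Hlongest. split; auto.
Qed.

Lemma maximal_chain_head C : maximal_stretched_chain A C ->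
  ~ exists b, stretched_chain A [b; C`_0].
Proof.
  intros [HC Hmax] (b & Hb).
  assert (HbC : In b C).
  { apply (Hmax (b :: C)); [apply stretched_chain_cons; auto | intros a Ha; right; exact Ha |].
    left. reflexivity. }
  destruct (In_nth C b id HbC) as (j & Hj & Hbj).
  destruct (stretched_chain_ends_le C 0 j HC) as [Hle _]; [lia|].
  apply stretched_chain_pairE in Hb as (_ & _ & _ & _ & Hlt & _).
  rewrite Hbj in Hle. lra.
Qed.

(** * Fast markings *)

Definition fast_marking (mark : (R -> R) -> R) : Prop :=
  (forall a, In a A -> exists x y, bump_supp a x y /\ x < mark a < y) /\
  (forall a b (sa sb : bool) t, In a A -> In b A -> (a, sa) <> (b, sb) ->
     foot a (mark a) sa t -> foot b (mark b) sb t -> False).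

Section FastMarking.

Variable mark : (R -> R) -> R.
Hypothesis fast : fast_marking mark.

Lemma fast_mark_supp a : In a A -> left_tp a < mark a < right_tp a.
Proof.
  intro Ha. destruct (proj1 fast a Ha) as (x & y & Hs & Hm).
  destruct (supp_ends_eq a x y Hs) as [? ?]; subst. exact Hm.
Qed.

Lemma fast_mark_image a : In a A -> mark a < a (mark a) < right_tp a.
Proof.
  intro Ha. apply (positive_bump_supp a (left_tp a)); auto using ends_in, fast_mark_supp.
Qed.

(* A transition point s of b inside a foot of a would make a foot of b overlap it
   on one side of s. *)
Lemma fast_foot_free a sa lo hi s : In a A ->
  (forall t, lo < t < hi -> foot a (mark a) sa t) -> transition_point A s -> ~ lo < s < hi.
Proof.
  intros Ha Hfoot Hs Hin. destruct fast as [_ Hdisjoint].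
  apply transition_pointE in Hs as (b & Hb & [-> | ->]).
  - pose proof (fast_mark_supp b Hb).
    assert (Hdiff : (a, sa) <> (b, false)).
    { intros [= -> ->]. specialize (Hfoot ((lo + left_tp b) / 2) ltac:(lra)).
      apply foot_leftE in Hfoot; [lra | exact Hb]. }
    pose proof (Rmin_l hi (mark b)). pose proof (Rmin_r hi (mark b)).
    pose proof (Rmin_glb_lt hi (mark b) (left_tp b) ltac:(lra) ltac:(lra)).
    apply (Hdisjoint a b sa false ((left_tp b + Rmin hi (mark b)) / 2) Ha Hb Hdiff).
    + apply Hfoot. lra.
    + apply foot_leftE; [exact Hb | lra].
  - pose proof (fast_mark_image b Hb).
    assert (Hdiff : (a, sa) <> (b, true)).
    { intros [= -> ->]. specialize (Hfoot ((right_tp b + hi) / 2) ltac:(lra)).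
      apply foot_rightE in Hfoot; [lra | exact Hb]. }
    pose proof (Rmax_l lo (b (mark b))). pose proof (Rmax_r lo (b (mark b))).
    pose proof (Rmax_lub_lt lo (b (mark b)) (right_tp b) ltac:(lra) ltac:(lra)).
    apply (Hdisjoint a b sa true ((Rmax lo (b (mark b)) + right_tp b) / 2) Ha Hb Hdiff).
    + apply Hfoot. lra.
    + apply foot_rightE; [exact Hb | lra].
Qed.

Lemma fast_mark_link a b : In a A -> In b A -> left_tp b < left_tp a < right_tp b ->
  mark a <= b (mark b).
Proof.
  intros Ha Hb Hab. apply Rnot_lt_le. intro Hlt. destruct fast as [_ Hdisjoint].
  pose proof (fast_mark_supp a Ha). pose proof (fast_mark_image b Hb).
  set (lo := Rmax (left_tp a) (b (mark b))). set (hi := Rmin (mark a) (right_tp b)).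
  assert (lo < hi) by (apply Rmax_lub_lt; apply Rmin_glb_lt; lra).
  pose proof (Rmax_l (left_tp a) (b (mark b))). pose proof (Rmax_r (left_tp a) (b (mark b))).
  pose proof (Rmin_l (mark a) (right_tp b)). pose proof (Rmin_r (mark a) (right_tp b)).
  apply (Hdisjoint a b false true ((lo + hi) / 2) Ha Hb); [congruence | |].
  - apply foot_leftE; [exact Ha | unfold lo, hi in *; lra].
  - apply foot_rightE; [exact Hb | unfold lo, hi in *; lra].
Qed.

Theorem fast_chain_condition C : stretched_chain A C -> chain_condition A C.
Proof.
  intros HC tmin tmax (Hmin & Hmin_u & _) (Hmax & Hmax_u & _).
  pose proof HC as (Hne & _).
  assert (Hlen : (0 < length C)%nat) by (destruct C; [congruence | simpl; lia]).
  assert (HinA : forall i, (i < length C)%nat -> In C`_i A)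
    by (intros i Hi; apply stretched_chain_nth_in; auto).
  pose proof (in_union_supp_bounds C tmin HC Hmin_u).
  pose proof (in_union_supp_bounds C tmax HC Hmax_u).
  set (k := Nat.pred (length C)) in *.
  assert (Hfirst : mark C`_0 <= tmin).
  { apply Rnot_lt_le. intro Hlt.
    apply (fast_foot_free C`_0 false (left_tp C`_0) (mark C`_0) tmin); auto; [|lra].
    intros t Ht. apply foot_leftE; auto. }
  assert (Hlast : tmax <= C`_k (mark C`_k)).
  { apply Rnot_lt_le. intro Hlt.
    apply (fast_foot_free C`_k true (C`_k (mark C`_k)) (right_tp C`_k) tmax);
      [apply HinA; lia | | exact Hmax | lra].
    intros t Ht. apply foot_rightE; [apply HinA; lia | lra]. }
  apply (Rle_trans _ _ _ Hlast). apply prodC_ge; auto.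
  - intros a Ha. destruct (stretched_chain_in C a HC Ha) as [HaA _].
    pose proof (fast_mark_supp a HaA). pose proof (ends_bounds a HaA).
    split; [apply bumps, HaA | unfold inI; lra].
  - intros i Hi. apply fast_mark_link; [apply HinA; lia | apply HinA; lia |].
    destruct (stretched_chain_link C i HC Hi) as (? & ? & _). lra.
  - apply transition_point_inI, Hmin.
Qed.

End FastMarking.

(** * Markers propagated along maximal chains *)

Section Construction.

Hypothesis proper : geometrically_proper A.

Lemma proper_left a b : In a A -> In b A -> left_tp a = left_tp b -> a = b.
Proof.
  intros Ha Hb Heq. apply ((proj1 proper) a b (left_tp a) (right_tp a) (right_tp b));
    [exact Ha | exact Hb | apply ends_in, Ha | rewrite Heq; apply ends_in, Hb].
Qed.

Lemma proper_right a b : In a A -> In b A -> right_tp a = right_tp b -> a = b.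
Proof.
  intros Ha Hb Heq. apply ((proj2 proper) a b (left_tp a) (left_tp b) (right_tp a));
    [exact Ha | exact Hb | apply ends_in, Ha | rewrite Heq; apply ends_in, Hb].
Qed.

Lemma chain_pred_unique b b' a :
  stretched_chain A [b; a] -> stretched_chain A [b'; a] -> b = b'.
Proof.
  intros Hb Hb'.
  apply stretched_chain_pairE in Hb as (Hb & _ & _ & _ & _ & Hab & _ & Hgap).
  apply stretched_chain_pairE in Hb' as (Hb' & _ & _ & _ & _ & Hab' & _ & Hgap').
  apply proper_right; [exact Hb | exact Hb' |].
  destruct (Rtotal_order (right_tp b) (right_tp b')) as [Hlt | [Heq | Hlt]]; [exfalso | exact Heq | exfalso].
  - apply (Hgap' (right_tp b)); [lra | apply ends_transition_point, Hb].
  - apply (Hgap (right_tp b')); [lra | apply ends_transition_point, Hb'].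
Qed.

Definition chain_pred (a : R -> R) : R -> R :=
  epsilon (inhabits id) (fun b => stretched_chain A [b; a]).

Lemma chain_pred_eq b a : stretched_chain A [b; a] -> chain_pred a = b.
Proof.
  intro Hba. apply (chain_pred_unique (chain_pred a) b a); [|exact Hba].
  apply (epsilon_spec (inhabits id) (fun b => stretched_chain A [b; a])). now exists b.
Qed.

Definition least_tp_in (a : R -> R) (p : R) : Prop :=
  transition_point A p /\ left_tp a < p < right_tp a /\
  forall s, transition_point A s -> left_tp a < s < right_tp a -> p <= s.

Definition first_tp (a : R -> R) : R := epsilon (inhabits 0) (least_tp_in a).

Lemma first_tp_spec a : In a A -> ~ isolated A a -> least_tp_in a (first_tp a).
Proof.
  intros Ha Hai. unfold first_tp. apply epsilon_spec, least_transition_point.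
  apply NNPP. intro Hno. apply Hai, isolatedE; [exact Ha|]. intros t Ht Htp. eauto.
Qed.

(* Any fuel larger than [rank a] gives the same value, see [chain_mark_stable]. *)
Fixpoint chain_mark (n : nat) (a : R -> R) : R :=
  match n with
  | O => first_tp a
  | S n =>
      if excluded_middle_informative (exists b, stretched_chain A [b; a])
      then chain_pred a (chain_mark n (chain_pred a))
      else first_tp a
  end.

Lemma chain_mark_S n a : chain_mark (S n) a =
  if excluded_middle_informative (exists b, stretched_chain A [b; a])
  then chain_pred a (chain_mark n (chain_pred a))
  else first_tp a.
Proof. reflexivity. Qed.

Definition rank (a : R -> R) : nat :=
  length (filter (fun c => if Rlt_dec (left_tp c) (left_tp a) then true else false) A).

Lemma rank_pred b a : stretched_chain A [b; a] -> (rank b < rank a)%nat.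
Proof.
  intro Hba. apply stretched_chain_pairE in Hba as (Hb & _ & _ & _ & Hlt & _).
  unfold rank. apply filter_length_lt with b; [|exact Hb | |].
  - intro c. destruct (Rlt_dec (left_tp c) (left_tp b)), (Rlt_dec (left_tp c) (left_tp a));
      first [reflexivity | discriminate | lra].
  - destruct Rlt_dec; [lra | reflexivity].
  - destruct Rlt_dec; [reflexivity | lra].
Qed.

Lemma rank_lt_length a : In a A -> (rank a < length A)%nat.
Proof.
  intro Ha. unfold rank. rewrite <- (filter_true A) at 2.
  apply filter_length_lt with a; [reflexivity | exact Ha | | reflexivity].
  destruct Rlt_dec; [lra | reflexivity].
Qed.

Lemma chain_mark_succ n a : (rank a < n)%nat -> chain_mark (S n) a = chain_mark n a.
Proof.
  induction n as [|n IH] in a |- *; intro Hn; [lia|].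
  rewrite (chain_mark_S (S n) a), (chain_mark_S n a).
  destruct excluded_middle_informative as [[b Hb] | _]; [|reflexivity].
  rewrite (chain_pred_eq b a Hb). f_equal. apply IH.
  pose proof (rank_pred b a Hb). lia.
Qed.

Lemma chain_mark_stable n m a : (rank a < n)%nat -> (n <= m)%nat ->
  chain_mark m a = chain_mark n a.
Proof.
  intros Hn Hm. induction Hm as [|m Hm IH]; [reflexivity|].
  rewrite chain_mark_succ by lia. exact IH.
Qed.

Definition fast_mark (a : R -> R) : R :=
  if excluded_middle_informative (isolated A a)
  then (left_tp a + right_tp a) / 2
  else chain_mark (length A) a.

Lemma fast_mark_isolated a : isolated A a -> fast_mark a = (left_tp a + right_tp a) / 2.
Proof. intro Hiso. unfold fast_mark. destruct excluded_middle_informative; tauto. Qed.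

Lemma fast_mark_pred b a : stretched_chain A [b; a] -> fast_mark a = b (fast_mark b).
Proof.
  intro Hba. pose proof Hba as Hfacts.
  apply stretched_chain_pairE in Hfacts as (Hb & Ha & Hbi & Hai & _).
  pose proof (rank_pred b a Hba). pose proof (rank_lt_length a Ha).
  unfold fast_mark.
  destruct (excluded_middle_informative (isolated A a)) as [? | _]; [contradiction|].
  destruct (excluded_middle_informative (isolated A b)) as [? | _]; [contradiction|].
  destruct (length A) as [|n]; [lia|].
  rewrite chain_mark_S. destruct excluded_middle_informative as [_ | Hno]; [|exfalso; eauto].
  rewrite (chain_pred_eq b a Hba). f_equal. symmetry. apply chain_mark_stable; lia.
Qed.

Lemma fast_mark_first a : ~ isolated A a -> ~ (exists b, stretched_chain A [b; a]) ->
  fast_mark a = first_tp a.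
Proof.
  intros Hai Hno. unfold fast_mark.
  destruct (excluded_middle_informative (isolated A a)) as [? | _]; [contradiction|].
  destruct (length A) as [|n]; [reflexivity|].
  rewrite chain_mark_S. destruct excluded_middle_informative; [contradiction | reflexivity].
Qed.

Definition clear_marker (a : R -> R) (m : R) : Prop :=
  left_tp a < m < right_tp a /\
  (forall s, transition_point A s -> ~ left_tp a < s < m) /\
  (forall s, transition_point A s -> ~ a m < s < right_tp a).

Section ChainMarkers.

Variable C : list (R -> R).
Hypothesis HC : stretched_chain A C.
Variable t : nat -> R.
Hypothesis t_first : least_tp_in C`_0 (t 0%nat).
Hypothesis t_succ : forall i, (S i < length C)%nat -> t (S i) = C`_i (t i).
Hypothesis t_bound : forall s, transition_point A s -> in_union_supp C s ->
  s <= C`_(Nat.pred (length C)) (t (Nat.pred (length C))).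

Lemma chain_image_supp i s : (i < length C)%nat ->
  left_tp C`_i < s < right_tp C`_i -> s < C`_i s < right_tp C`_i.
Proof.
  intro Hi. apply positive_bump_supp; [apply bumps | apply ends_in];
    apply stretched_chain_nth_in; assumption.
Qed.

(* If a marker left the support of its bump, every later bump would fix it, and the
   product would fall below the transition point [right_tp C`_i] of the union. *)
Lemma chain_markers_supp i : (i < length C)%nat -> left_tp C`_i < t i < right_tp C`_i.
Proof.
  induction i as [|i IH]; intro Hi; [apply t_first|].
  specialize (IH ltac:(lia)).
  pose proof (chain_image_supp i (t i) ltac:(lia) IH) as Himage.
  destruct (stretched_chain_link C i HC Hi) as (_ & Hx & Hy & _).
  rewrite t_succ by exact Hi. split; [|lra].
  apply Rnot_le_lt. intro Hle. rewrite <- t_succ in Hle, Himage by exact Hi.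
  assert (HI : inI (t (S i))).
  { pose proof (ends_bounds C`_i (stretched_chain_nth_in C i HC ltac:(lia))).
    unfold inI. lra. }
  assert (Hconst : forall j, (S i <= j < length C)%nat -> t j = t (S i)).
  { intros j [Hij Hj]. induction Hij as [|j Hij IHj]; [reflexivity|].
    rewrite t_succ, IHj by lia. apply (chain_fixes_left C _ (S i)); auto; lia. }
  assert (Hprod : C`_(Nat.pred (length C)) (t (Nat.pred (length C))) = t (S i)).
  { rewrite Hconst by lia. apply (chain_fixes_left C _ (S i)); auto; lia. }
  assert (Hy_bound : right_tp C`_i <= t (S i)).
  { rewrite <- Hprod. apply t_bound.
    - apply ends_transition_point, stretched_chain_nth_in; [exact HC | lia].
    - apply in_union_suppE; [exact HC|]. exists (S i). split; [exact Hi | lra]. }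
  lra.
Qed.

Lemma chain_markers_clear i : (i < length C)%nat -> clear_marker C`_i (t i).
Proof.
  intro Hi. pose proof (chain_markers_supp i Hi) as Hsupp.
  pose proof (chain_image_supp i (t i) Hi Hsupp) as Himage.
  split; [exact Hsupp | split]; intros s Hs Hlt.
  - destruct i as [|i].
    + destruct t_first as (_ & _ & Hleast).
      assert (t 0%nat <= s) by (apply Hleast; [exact Hs | lra]). lra.
    + destruct (stretched_chain_link C i HC Hi) as (_ & _ & _ & Hgap).
      pose proof (chain_image_supp i (t i) ltac:(lia) (chain_markers_supp i ltac:(lia))).
      rewrite t_succ in Hlt by exact Hi. apply (Hgap s); [lra | exact Hs].
  - destruct (Nat.eq_dec (S i) (length C)) as [Hlast | Hnext].
    + assert (s <= C`_i (t i)); [|lra].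
      replace i with (Nat.pred (length C)) by lia. apply t_bound; [exact Hs|].
      apply in_union_suppE; [exact HC|]. exists (Nat.pred (length C)).
      replace (Nat.pred (length C)) with i by lia. split; [exact Hi | lra].
    + destruct (stretched_chain_link C i HC ltac:(lia)) as (_ & _ & _ & Hgap).
      pose proof (chain_markers_supp (S i) ltac:(lia)).
      rewrite <- t_succ in Hlt by lia. apply (Hgap s); [lra | exact Hs].
Qed.

End ChainMarkers.

Lemma maximal_chain_clear_markers C i : maximal_stretched_chain A C -> chain_condition A C ->
  (i < length C)%nat -> clear_marker C`_i (fast_mark C`_i).
Proof.
  intros HM Hcond Hi. pose proof HM as [HC _]. pose proof HC as (Hne & _).
  assert (Hfirst : least_tp_in C`_0 (fast_mark C`_0)).
  { destruct (stretched_chain_in C C`_0 HC) as [H0 H0i]; [apply nth_In; lia|].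
    rewrite fast_mark_first by (auto using maximal_chain_head). apply first_tp_spec; auto. }
  assert (Hsucc : forall j, (S j < length C)%nat -> fast_mark C`_(S j) = C`_j (fast_mark C`_j))
    by (intros j Hj; apply fast_mark_pred, stretched_chain_pair; auto).
  apply (chain_markers_clear C HC (fun j => fast_mark C`_j) Hfirst Hsucc); [|exact Hi].
  intros s Hs Hsu.
  destruct (greatest_transition_point (in_union_supp C)) as (tmax & Htmax & Htmax_u & Hgreatest);
    [eauto|].
  apply Rle_trans with tmax; [apply Hgreatest; assumption|].
  rewrite <- prodC_eq by assumption. apply Hcond; [|split; auto].
  destruct Hfirst as (Htp & Hin & Hleast). split; [exact Htp | split].
  - apply in_union_suppE; [exact HC|]. exists 0%nat. split; [lia | exact Hin].
  - intros s' Hs' Hu'. pose proof (in_union_supp_bounds C s' HC Hu').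
    destruct (Rlt_le_dec s' (right_tp C`_0)); [apply Hleast; auto; lra | lra].
Qed.

Lemma fast_mark_clear a : (forall C, maximal_stretched_chain A C -> chain_condition A C) ->
  In a A -> clear_marker a (fast_mark a).
Proof.
  intros Hcond Ha. destruct (classic (isolated A a)) as [Hiso | Hai].
  - rewrite fast_mark_isolated by exact Hiso. rewrite isolatedE in Hiso by exact Ha.
    pose proof (ends_bounds a Ha).
    pose proof (positive_bump_supp a _ _ ((left_tp a + right_tp a) / 2) (bumps a Ha)
                  (ends_in a Ha) ltac:(lra)).
    split; [lra | split]; intros s Hs Hlt; apply (Hiso s); auto; lra.
  - destruct (exists_maximal_chain a Ha Hai) as (C & HM & HaC).
    destruct (In_nth C a id HaC) as (i & Hi & <-).
    apply maximal_chain_clear_markers; auto.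
Qed.

Lemma clear_left_feet_disjoint (m : (R -> R) -> R) a b t : In a A -> In b A -> a <> b ->
  clear_marker a (m a) -> clear_marker b (m b) ->
  left_tp a < t < m a -> left_tp b < t < m b -> False.
Proof.
  intros Ha Hb Hab (_ & Ha_left & _) (_ & Hb_left & _) Hta Htb.
  destruct (Rtotal_order (left_tp a) (left_tp b)) as [Hlt | [Heq | Hlt]].
  - apply (Ha_left (left_tp b)); [apply ends_transition_point, Hb | lra].
  - apply Hab, proper_left; assumption.
  - apply (Hb_left (left_tp a)); [apply ends_transition_point, Ha | lra].
Qed.

Lemma clear_right_feet_disjoint (m : (R -> R) -> R) a b t : In a A -> In b A -> a <> b ->
  clear_marker a (m a) -> clear_marker b (m b) ->
  a (m a) <= t < right_tp a -> b (m b) <= t < right_tp b -> False.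
Proof.
  intros Ha Hb Hab (_ & _ & Ha_right) (_ & _ & Hb_right) Hta Htb.
  destruct (Rtotal_order (right_tp a) (right_tp b)) as [Hlt | [Heq | Hlt]].
  - apply (Hb_right (right_tp a)); [apply ends_transition_point, Ha | lra].
  - apply Hab, proper_right; assumption.
  - apply (Ha_right (right_tp b)); [apply ends_transition_point, Hb | lra].
Qed.

Lemma clear_feet_link (m : (R -> R) -> R) a b t : In a A -> In b A ->
  clear_marker a (m a) -> clear_marker b (m b) ->
  left_tp a < t < m a -> b (m b) <= t < right_tp b -> stretched_chain A [b; a].
Proof.
  intros Ha Hb (Ha_in & Ha_left & Ha_right) (Hb_in & Hb_left & Hb_right) Hta Htb.
  pose proof (positive_bump_supp a _ _ (m a) (bumps a Ha) (ends_in a Ha) Ha_in).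
  pose proof (positive_bump_supp b _ _ (m b) (bumps b Hb) (ends_in b Hb) Hb_in).
  destruct (ends_transition_point a Ha) as [Hxa Hya].
  destruct (ends_transition_point b Hb) as [Hxb Hyb].
  assert (Hab : a <> b) by (intros ->; lra).
  assert (Hx : left_tp b < left_tp a).
  { destruct (Rtotal_order (left_tp b) (left_tp a)) as [Hlt | [Heq | Hlt]]; [exact Hlt | |];
      exfalso; [apply Hab, proper_left; auto | apply (Ha_left (left_tp b)); [exact Hxb | lra]]. }
  assert (Hy : right_tp b < right_tp a).
  { destruct (Rtotal_order (right_tp b) (right_tp a)) as [Hlt | [Heq | Hlt]]; [exact Hlt | |];
      exfalso; [apply Hab, proper_right; auto | apply (Hb_right (right_tp a)); [exact Hya | lra]]. }
  apply stretched_chain_pairE. repeat split; auto; try lra.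
  - rewrite isolatedE by exact Hb. intro Hiso. apply (Hiso (left_tp a)); [lra | exact Hxa].
  - rewrite isolatedE by exact Ha. intro Hiso. apply (Hiso (right_tp b)); [lra | exact Hyb].
  - intros s Hs Htp. destruct (Rlt_le_dec s (m a)).
    + apply (Ha_left s); [exact Htp | lra].
    + apply (Hb_right s); [exact Htp | lra].
Qed.

Theorem maximal_chain_condition_fast :
  (forall C, maximal_stretched_chain A C -> chain_condition A C) -> geometrically_fast A.
Proof.
  intros Hcond. split; [exact proper|]. exists fast_mark.
  assert (Hclear : forall a, In a A -> clear_marker a (fast_mark a))
    by (intros; apply fast_mark_clear; assumption).
  split.
  - intros a Ha. exists (left_tp a), (right_tp a). split; [apply ends_in, Ha | apply Hclear, Ha].
  - intros a b sa sb t Ha Hb Hne Fa Fb.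
    destruct sa, sb; rewrite ?foot_leftE, ?foot_rightE in Fa by exact Ha;
      rewrite ?foot_leftE, ?foot_rightE in Fb by exact Hb.
    + apply (clear_right_feet_disjoint fast_mark a b t); auto; congruence.
    + rewrite (fast_mark_pred a b) in Fb; [lra|].
      apply (clear_feet_link fast_mark b a t); auto.
    + rewrite (fast_mark_pred b a) in Fa; [lra|].
      apply (clear_feet_link fast_mark a b t); auto.
    + apply (clear_left_feet_disjoint fast_mark a b t); auto; congruence.
Qed.

End Construction.

End BumpSet.

Theorem proposition4p2 (A : hset) :
  (forall a, In a A -> positive_bump a) ->
  geometrically_proper A ->
  (geometrically_fast A <->
     (forall C, stretched_chain A C -> chain_condition A C)) /\
  ((forall C, stretched_chain A C -> chain_condition A C) <->
     (forall C, maximal_stretched_chain A C -> chain_condition A C)).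
Proof.
  intros bumps proper.
  assert (fast_all : geometrically_fast A ->
            forall C, stretched_chain A C -> chain_condition A C).
  { intros (_ & mark & Hmark). exact (fast_chain_condition A bumps mark Hmark). }
  assert (maximal_fast : (forall C, maximal_stretched_chain A C -> chain_condition A C) ->
            geometrically_fast A)
    by exact (maximal_chain_condition_fast A bumps proper).
  assert (all_maximal : (forall C, stretched_chain A C -> chain_condition A C) ->
            forall C, maximal_stretched_chain A C -> chain_condition A C)
    by (intros Hall C [HC _]; exact (Hall C HC)).
  split; split; auto.
Qed.
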